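(* Let $\mathcal S=(E,\mathcal I)$ be an $r$-covering system. If $\texttt{a}$ and $\texttt{a}'$ are two activities of $\mathcal S$, then they have the same activity vector (equivalently, the same activity polynomial).
   Context: For finite sets $X\subseteq Y$, write $[X,Y]=\{Z: X\subseteq Z\subseteq Y\}$. An $r$-covering system is a pair $\mathcal S=(E,\mathcal I)$ where $E$ is a finite set and $\mathcal I$ is a collection of subsets of $E$, each of cardinality at most $r$, such that for every $I\in\mathcal I$ there exists $B\in\mathcal I$ with $|B|=r$ and $[I,B]\subseteq\mathcal I$. Members of $\mathcal I$ of cardinality $r$ are called bases, and $\mathcal B$ denotes the set of bases. An activity of $\mathcal S$ is a function $\texttt{a}:\mathcal B\to 2^E$ such that for every $B\in\mathcal B$, $\texttt{a}(B)\subseteq B$ and $[B\setminus\texttt{a}(B),B]\subseteq\mathcal I$, and such that every $I\in\mathcal I$ belongs to $[B\setminus\texttt{a}(B),B]$ for exactly one $B\in\mathcal B$. The activity vector is $(a_0,\dots,a_r)$ where $a_i$ is the number of bases $B$ with $|\texttt{a}(B)|=i$. *)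

From mathcomp Require Import all_boot.
Set Implicit Arguments. Unset Strict Implicit. Unset Printing Implicit Defensive.

Definition interval {E : finType} (X Y : {set E}) : {set {set E}} :=
  [set Z : {set E} | (X \subset Z) && (Z \subset Y)].

Definition covering_system {E : finType} (r : nat) (I : {set {set E}}) : Prop :=
  (forall X, X \in I -> #|X| <= r) /\
  (forall X, X \in I -> exists B, [/\ B \in I, #|B| = r & interval X B \subset I]).

Definition bases {E : finType} (r : nat) (I : {set {set E}}) : {set {set E}} :=
  [set B in I | #|B| == r].

(* An activity (only its values on bases matter). *)
Definition activity {E : finType} (r : nat) (I : {set {set E}})
    (a : {set E} -> {set E}) : Prop :=
  (forall B, B \in bases r I -> a B \subset B /\ interval (B :\: a B) B \subset I) /\
  (forall X, X \in I ->
     exists! B, B \in bases r I /\ X \in interval (B :\: a B) B).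

Definition activity_vector {E : finType} (r : nat) (I : {set {set E}})
    (a : {set E} -> {set E}) : seq nat :=
  [seq #|[set B in bases r I | #|a B| == i]| | i <- iota 0 r.+1].

(* Count the members of I of size r - j.  Since the intervals [B \ a(B), B]
   partition I, and [B \ a(B), B] has 'C(|a(B)|, j) members of size |B| - j,
   this count equals sum_i a_i * 'C(i, j).  The matrix ('C(i, j))_{i,j <= r}
   is unitriangular, so these counts, which do not depend on the activity,
   determine the activity vector. *)
From mathcomp Require Import all_boot zify.
Set Implicit Arguments. Unset Strict Implicit. Unset Printing Implicit Defensive.

Lemma binomial_transform_inj (n : nat) (u v : nat -> nat) :
    (forall j, j <= n ->
       \sum_(i < n.+1) u i * 'C(i, j) = \sum_(i < n.+1) v i * 'C(i, j)) ->
  forall j, j <= n -> u j = v j.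
Proof.
elim: n => [|n IHn] Huv j.
  by rewrite leqn0 => /eqP->; have := Huv 0 (leqnn 0); rewrite !big_ord1 !muln1.
have top : u n.+1 = v n.+1.
  have := Huv n.+1 (leqnn _).
  rewrite !(big_ord_recr n.+1) /= !binn !muln1.
  by rewrite !big1 // => i _; rewrite bin_small ?muln0.
rewrite leq_eqVlt => /orP[/eqP-> // | /IHn]; apply => k kn.
by have := Huv k (leqW kn); rewrite !(big_ord_recr n.+1) /= top => /addIn.
Qed.

Lemma setDDK (T : finType) (A B : {set T}) : A \subset B -> B :\: (B :\: A) = A.
Proof. by move=> AB; rewrite setDDr setDv set0U (setIidPr AB). Qed.

Lemma card_interval_codim (T : finType) (A B : {set T}) j : A \subset B ->
  #|[set X in interval (B :\: A) B | #|X| + j == #|B|]| = 'C(#|A|, j).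
Proof.
move=> AB; rewrite -cards_draws.
have subB (Y : {set T}) : Y \subset A -> Y \subset B by move/subset_trans; apply.
have -> : [set X in interval (B :\: A) B | #|X| + j == #|B|] =
          setD B @: [set Y : {set T} | Y \subset A & #|Y| == j].
  apply/setP => X; rewrite !inE; apply/idP/imsetP => [|[Y]].
    case/andP=> /andP[BAX XB] cX; exists (B :\: X); last by rewrite setDDK.
    rewrite inE subDset setUC -subDset BAX /=.
    by rewrite cardsD (setIidPr XB); lia.
  rewrite inE => /andP[YA cY] ->; rewrite setDS //= subsetDl.
  have := subset_leq_card (subB Y YA).
  by rewrite cardsD (setIidPr (subB Y YA)); lia.
apply: card_in_imset => Y Z; rewrite !inE => /andP[/subB YB _] /andP[/subB ZB _].
by move=> eBYZ; rewrite -(setDDK YB) -(setDDK ZB) eBYZ.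
Qed.

Section Activity.
Variables (E : finType) (r : nat) (I : {set {set E}}) (a : {set E} -> {set E}).
Hypothesis act : activity r I a.

Definition activity_count i := #|[set B in bases r I | #|a B| == i]|.

Lemma card_activity_partition (P : pred {set E}) :
  #|[set X in I | P X]| =
  \sum_(B in bases r I) #|[set X in interval (B :\: a B) B | P X]|.
Proof.
transitivity (\sum_(X in [set X in I | P X])
                \sum_(B in bases r I | X \in interval (B :\: a B) B) 1).
  rewrite -sum1_card; apply: eq_bigr => X; rewrite inE => /andP[XI _].
  have [B0 [B0X B0_uniq]] := act.2 X XI.
  rewrite (big_pred1 B0) // => B /=; apply/andP/eqP => [BX | ->] //.
  by rewrite (B0_uniq B BX).
rewrite (exchange_big_dep (mem (bases r I))) /=; last by move=> ? ? _ /andP[].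
apply: eq_bigr => B Bb; rewrite -sum1_card; apply: eq_bigl => X.
have /subsetP intervalI := (act.1 B Bb).2.
rewrite Bb [X \in [set _ in I | _]]in_set [RHS]in_set /=.
case XB: (X \in interval _ _); last by rewrite andbF.
by rewrite (intervalI X XB) andbT.
Qed.

Lemma card_members_codim j :
  #|[set X in I | #|X| + j == r]| = \sum_(i < r.+1) activity_count i * 'C(i, j).
Proof.
have basisP B : B \in bases r I -> a B \subset B /\ #|B| = r.
  by move=> Bb; split; [exact: (act.1 B Bb).1 | move: Bb; rewrite inE => /andP[_ /eqP]].
rewrite card_activity_partition.
transitivity (\sum_(B in bases r I) \sum_(i < r.+1 | #|a B| == i) 'C(i, j)).
  apply: eq_bigr => B /basisP[aB cB]; rewrite -{1}cB card_interval_codim //.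
  have aB_lt : #|a B| < r.+1 by rewrite ltnS -cB subset_leq_card.
  by rewrite (big_pred1 (Ordinal aB_lt)) // => i; rewrite eq_sym -val_eqE.
rewrite (exchange_big_dep xpredT) //; apply: eq_bigr => i _.
rewrite /activity_count -sum1_card big_distrl /=.
by apply: eq_big => [B | B _]; rewrite ?inE ?mul1n.
Qed.

End Activity.

Theorem mainTheorem4 (E : finType) (r : nat) (I : {set {set E}})
    (a a' : {set E} -> {set E}) :
  covering_system r I -> activity r I a -> activity r I a' ->
  activity_vector r I a = activity_vector r I a'.
Proof.
move=> _ act act'; apply/eq_in_map => i; rewrite mem_iota add0n ltnS.
apply: (binomial_transform_inj (u := activity_count r I a)
                               (v := activity_count r I a')) => j _.
by rewrite -(card_members_codim act) -(card_members_codim act').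
Qed.
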